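(* Let $K$ and $K'$ be two non-degenerate CMIs, with $\mathrm{can}(\mathrm{pur}(K))=(C,\langle\mathbb I_K,\mathbb I_K,P_i,1\le i\le t\rangle)$ and $\mathrm{can}(\mathrm{pur}(K'))=(C',\langle\mathbb I_{K'},\mathbb I_{K'},P'_j,1\le j\le s\rangle)$. If $K$ implies $K'$, then $C\subseteq C'$.
   Context: Setting: $X_1,\dots,X_n$ jointly distributed discrete random variables with $H(X_i)<\infty$; distribution unspecified. $X_\alpha=(X_i,i\in\alpha)$, $X_\emptyset$ constant. A CMI is $K=(C,\langle Q_1,\dots,Q_k\rangle)$, $k\ge0$, $C\subseteq\{1,\dots,n\}$, $\langle\cdot\rangle$ an unordered multiset of subsets; valid (for a given distribution) if $\sum_iH(X_{Q_i}|X_C)-H(X_{Q_1},\dots,X_{Q_k}|X_C)=0$. Empty members may be deleted. Degenerate = valid for every distribution, written $(\cdot,\langle\ \rangle)$. ''$K$ implies $K'$'': for every joint distribution, if $K$ is valid then $K'$ is valid. $\mathrm{pur}(K)=(C,\langle Q_i\setminus C:Q_i\setminus C\ne\emptyset\rangle)$. For pure $K$: $\mathbb I_K$ = indices lying in at least two members of the collection if $k\ge2$, else $\emptyset$; $P_1,\dots,P_t$ the nonempty sets among $Q_i\setminus\mathbb I_K$; $\mathrm{can}(K)=(\cdot,\langle\ \rangle)$ if $k\le1$, $(C,\langle\mathbb I_K,\mathbb I_K\rangle)$ if $k\ge2,\mathbb I_K\ne\emptyset,t\le1$, $(C,\langle P_1..P_t\rangle)$ if $k\ge2,\mathbb I_K=\emptyset$,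 $(C,\langle\mathbb I_K,\mathbb I_K,P_1..P_t\rangle)$ if $k\ge2,\mathbb I_K\ne\emptyset,t\ge2$. General-form notation $(C,\langle\mathbb I_K,\mathbb I_K,P_i,1\le i\le t\rangle)$: copies of $\mathbb I_K$ omitted when empty, and $t=0$ for the case $(C,\langle\mathbb I_K,\mathbb I_K\rangle)$. *)

From HB Require Import structures.
From mathcomp Require Import all_boot all_order all_algebra.
From mathcomp Require Import all_classical all_reals all_analysis.
Set Implicit Arguments. Unset Strict Implicit. Unset Printing Implicit Defensive.
Import Order.TTheory GRing.Theory Num.Theory.
Local Open Scope ring_scope.

(* A joint outcome of X_1..X_n (indexed by 'I_n), each X_i taking values in a
   countable alphabet, encoded in nat. *)
Definition outcome (n : nat) := {ffun 'I_n -> nat}.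

Definition is_distribution (R : realType) (n : nat) (p : outcome n -> R) : Prop :=
  (forall x, 0 <= p x) /\ (\esum_(x in (@classical_sets.setT (outcome n))) (p x)%:E = 1)%E.

(* value of X_A = (X_i, i in A), canonically represented (0 outside A) *)
Definition proj (n : nat) (A : {set 'I_n}) (x : outcome n) : outcome n :=
  [ffun i => if i \in A then x i else 0%N].

Definition marginal (R : realType) (n : nat) (p : outcome n -> R)
  (A : {set 'I_n}) (v : outcome n) : R :=
  fine (\esum_(y in (fun y => proj A y = v)) (p y)%:E)%E.

(* Shannon entropy H(X_A) (natural log; ln 0 = 0 so 0 log 0 = 0), in \bar R *)
Definition entropyE (R : realType) (n : nat) (p : outcome n -> R)
  (A : {set 'I_n}) : \bar R :=
  \esum_(v in (@classical_sets.setT (outcome n))) (- (marginal p A v * ln (marginal p A v)))%:E.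

Definition finite_entropies (R : realType) (n : nat) (p : outcome n -> R) : Prop :=
  forall i : 'I_n, (entropyE p (finset.set1 i) < +oo)%E.

Definition admissible (R : realType) (n : nat) (p : outcome n -> R) : Prop :=
  is_distribution p /\ finite_entropies p.

(* real-valued entropy (finite for admissible p) *)
Definition entH (R : realType) (n : nat) (p : outcome n -> R) (A : {set 'I_n}) : R :=
  fine (entropyE p A).

Definition condH (R : realType) (n : nat) (p : outcome n -> R) (Q C : {set 'I_n}) : R :=
  entH p (Q :|: C) - entH p C.

(* A CMI (C, <Q_1..Q_k>): the multiset is a seq (all notions below are
   invariant under permutation). *)
Definition CMI (n : nat) := ({set 'I_n} * seq {set 'I_n})%type.

Definition valid (R : realType) (n : nat) (p : outcome n -> R) (K : CMI n) : Prop :=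
  \sum_(Q <- K.2) condH p Q K.1 - condH p ((\big[@finset.setU _/(@finset.set0 ('I_n))]_(Q <- K.2) Q)) K.1 = 0.

Definition degenerate (R : realType) (n : nat) (K : CMI n) : Prop :=
  forall p : outcome n -> R, admissible p -> valid p K.

Definition cmi_implies (R : realType) (n : nat) (K K' : CMI n) : Prop :=
  forall p : outcome n -> R, admissible p -> valid p K -> valid p K'.

Definition pur (n : nat) (K : CMI n) : CMI n :=
  (K.1, [seq Q :\: K.1 | Q <- [seq Q <- K.2 | Q :\: K.1 != (@finset.set0 ('I_n))]]).

Definition IK (n : nat) (K : CMI n) : {set 'I_n} :=
  if (1 < size K.2)%N then finset.finset (fun i : 'I_n => (1 < count (fun Q : {set 'I_n} => i \in Q) K.2)%N)
  else (@finset.set0 ('I_n)).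

Definition Ps (n : nat) (K : CMI n) : seq {set 'I_n} :=
  [seq Q :\: IK K | Q <- [seq Q <- K.2 | Q :\: IK K != (@finset.set0 ('I_n))]].

(* can(K); None stands for the degenerate CMI (. , < >) *)
Definition can (n : nat) (K : CMI n) : option (CMI n) :=
  if (size K.2 <= 1)%N then None
  else if IK K == (@finset.set0 ('I_n)) then Some (K.1, Ps K)
  else if (size (Ps K) <= 1)%N then Some (K.1, [:: IK K; IK K])
  else Some (K.1, IK K :: IK K :: Ps K).

(** If some index [i] lies in [C] but not in [C'], let [B] be a fair bit
    and let every [X_k] with [k] outside [C'] be a copy of [B], all other
    [X_k] being constant.  Conditioned on [X_C], which already determines [B]
    because [i] is in [C], every conditional entropy in [K] vanishes, so [K]
    is valid.  Conditioned on [X_C'], every member of [pur K'] contributes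
    [ln 2] and so does their union; since [can (pur K')] exists, [pur K'] has
    at least two members, so [K'] is not valid. *)

From Pilot Require Import Defs.
From HB Require Import structures.
From mathcomp Require Import all_boot all_order all_algebra.
From mathcomp Require Import all_classical all_reals all_analysis.
Set Implicit Arguments. Unset Strict Implicit. Unset Printing Implicit Defensive.
Import Order.TTheory GRing.Theory Num.Theory.
Local Open Scope ring_scope.

Lemma esum_two_points (R : realType) (T : choiceType) (D : set T)
    (a : T -> \bar R) (x y : T) :
  x <> y -> (forall t, (0 <= a t)%E) ->
  (forall t, D t -> t <> x -> t <> y -> a t = 0%E) ->
  D x -> D y -> (\esum_(t in D) a t = a x + a y)%E.
Proof.
move=> xy a_ge0 a_eq0 Dx Dy.
rewrite (esumID [set x]) //.
have -> : (D `&` [set x])%classic = [set x]%classic.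
  by apply/seteqP; split=> [t [] //|t /= ->].
rewrite esum_set1 //; congr (_ + _)%E.
rewrite (esumID [set y]) //.
have -> : (D `&` ~` [set x] `&` [set y])%classic = [set y]%classic.
  by apply/seteqP; split=> [t [] //|t /= ->]; do !split=> //; move/esym.
rewrite esum_set1 // esum1 ?adde0 // => t [[Dt tx] ty]; exact: a_eq0.
Qed.

Lemma sum_count_const (R : nmodType) (T : Type) (s : seq T) (P : pred T) (c : R) :
  \sum_(t <- s) (if P t then c else 0) = c *+ count P s.
Proof.
elim: s => [|t s IH]; first by rewrite big_nil.
by rewrite big_cons IH /=; case: (P t); rewrite ?mulrS ?add0r.
Qed.

Lemma bigcup_seq_setI_eq0 (T : finType) (s : seq {set T}) (S : {set T}) :
  ((\big[@finset.setU _/finset.set0]_(Q <- s) Q) :&: S == finset.set0) =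
  all (fun Q => Q :&: S == finset.set0) s.
Proof.
elim: s => [|Q s IH]; first by rewrite big_nil finset.set0I eqxx.
by rewrite big_cons finset.setIUl finset.setU_eq0 IH.
Qed.

Section TwoPointMass.
Variables (R : realType) (T : choiceType).

Definition two_point_mass (v0 v1 v : T) : R :=
  (if v0 == v then 1/2 else 0) + (if v1 == v then 1/2 else 0).

Let plogp (x : R) := - (x * ln x).

Lemma plogp_half : plogp (1/2) = ln 2 / 2.
Proof. by rewrite /plogp div1r lnV ?posrE // mulrN opprK mulrC. Qed.

Lemma ln2_gt0 : 0 < ln (2 : R).
Proof. by rewrite ln_gt0 // ltr1n. Qed.

Lemma entropy_two_point_mass (v0 v1 : T) :
  (\esum_(v in [set: T]) (plogp (two_point_mass v0 v1 v))%:E =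
   (if v0 == v1 then 0 else ln 2)%:E)%E.
Proof.
have off v : v != v0 -> v != v1 -> plogp (two_point_mass v0 v1 v) = 0.
  rewrite /two_point_mass !(eq_sym _ v) => /negbTE-> /negbTE->.
  by rewrite /plogp addr0 mul0r oppr0.
have [e01|v01] := eqVneq v0 v1.
  rewrite -e01 in off *; apply: esum1 => v _.
  have [->|nv] := eqVneq v v0; last by rewrite off.
  by rewrite /two_point_mass eqxx -splitr /plogp ln1 mulr0 oppr0.
have on v : v = v0 \/ v = v1 -> plogp (two_point_mass v0 v1 v) = ln 2 / 2.
  rewrite /two_point_mass => -[]->; rewrite eqxx.
    by rewrite eq_sym (negbTE v01) addr0 plogp_half.
  by rewrite (negbTE v01) add0r plogp_half.
have on_ge0 v : v = v0 \/ v = v1 -> (0 <= (plogp (two_point_mass v0 v1 v))%:E)%E.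
  by move/on->; rewrite lee_fin divr_ge0 // ltW // ln2_gt0.
rewrite (@esum_two_points _ _ _ _ v0 v1) //; first last.
- by move=> v _ /eqP ? /eqP ?; rewrite off.
- move=> v; have [e|nv0] := eqVneq v v0; first by apply: on_ge0; left.
  have [e|nv1] := eqVneq v v1; first by apply: on_ge0; right.
  by rewrite off.
- exact/eqP.
rewrite (on v0) ?(on v1); [|by right|by left].
by rewrite -EFinD -splitr.
Qed.

End TwoPointMass.

Section CopiedBit.
Variables (R : realType) (n : nat) (S : {set 'I_n}) (i0 : 'I_n).
Hypothesis i0S : i0 \in S.

Definition bit_outcome (b : nat) : outcome n := [ffun k => if k \in S then b else 0%N].

Definition copied_bit (x : outcome n) : R :=
  if (x == bit_outcome 0) || (x == bit_outcome 1) then 1/2 else 0.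

Lemma bit_outcome0_neq1 : bit_outcome 0 <> bit_outcome 1.
Proof. by move/(congr1 (fun x : outcome n => x i0)); rewrite !ffunE i0S. Qed.

Lemma proj_bit_outcome_eq (A : {set 'I_n}) :
  (Defs.proj A (bit_outcome 0) == Defs.proj A (bit_outcome 1)) = (A :&: S == finset.set0).
Proof.
apply/eqP/eqP => [e|AS0].
  apply/finset.setP => k; rewrite !inE; apply/negbTE/andP => -[kA kS].
  by move: (congr1 (fun x : outcome n => x k) e); rewrite !ffunE kA kS.
apply/ffunP => k; rewrite !ffunE.
case kA: (k \in A) => //; case kS: (k \in S) => //.
have : k \in A :&: S by rewrite !inE kA kS.
by rewrite AS0 inE.
Qed.

Lemma copied_bit_ge0 x : 0 <= copied_bit x.
Proof. by rewrite /copied_bit; case: ifP. Qed.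

Lemma esum_copied_bit (D : set (outcome n)) :
  (\esum_(x in D) (copied_bit x)%:E =
   (if bit_outcome 0 \in D then (1/2)%:E else 0) +
   (if bit_outcome 1 \in D then (1/2)%:E else 0))%E.
Proof.
rewrite esum_mkcond (@esum_two_points _ _ _ _ (bit_outcome 0) (bit_outcome 1)) //.
- by rewrite /copied_bit !eqxx orbT.
- exact: bit_outcome0_neq1.
- by move=> x; case: ifP => // _; rewrite lee_fin copied_bit_ge0.
- move=> x _ /eqP/negbTE x0 /eqP/negbTE x1.
  by case: ifP => // _; rewrite /copied_bit x0 x1.
Qed.

Lemma marginal_copied_bit (A : {set 'I_n}) v :
  marginal copied_bit A v =
  two_point_mass R (Defs.proj A (bit_outcome 0)) (Defs.proj A (bit_outcome 1)) v.
Proof.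
rewrite /marginal /two_point_mass esum_copied_bit.
have inE_proj b : (bit_outcome b \in ((fun y => Defs.proj A y = v) : set _)) =
                  (Defs.proj A (bit_outcome b) == v).
  by apply/idP/eqP => [/set_mem|/mem_set].
rewrite !inE_proj.
by case: eqP => _; case: eqP => _; rewrite ?adde0 ?add0e ?addr0 ?add0r // -EFinD.
Qed.

Lemma entropyE_copied_bit (A : {set 'I_n}) :
  entropyE copied_bit A = (if A :&: S == finset.set0 then 0 else ln 2)%:E.
Proof.
rewrite /entropyE -proj_bit_outcome_eq -entropy_two_point_mass.
by apply: eq_esum => v _; rewrite marginal_copied_bit.
Qed.

Lemma entH_copied_bit (A : {set 'I_n}) :
  entH copied_bit A = if A :&: S == finset.set0 then 0 else ln 2.
Proof. by rewrite /entH entropyE_copied_bit. Qed.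

Lemma admissible_copied_bit : admissible copied_bit.
Proof.
split; last by move=> i; rewrite entropyE_copied_bit ltry.
split; first exact: copied_bit_ge0.
by rewrite esum_copied_bit !mem_set // -EFinD -splitr.
Qed.

Lemma condH_copied_bit (Q C : {set 'I_n}) :
  condH copied_bit Q C =
  if C :&: S == finset.set0 then (if Q :&: S == finset.set0 then 0 else ln 2) else 0.
Proof.
rewrite /condH !entH_copied_bit finset.setIUl finset.setU_eq0.
by case: (C :&: S == _); case: (Q :&: S == _); rewrite /= ?subrr ?subr0.
Qed.

Lemma valid_copied_bit (K : CMI n) :
  K.1 :&: S != finset.set0 -> valid copied_bit K.
Proof.
move=> /negbTE KS; rewrite /valid condH_copied_bit KS subr0.
by rewrite big1 // => Q _; rewrite condH_copied_bit KS.
Qed.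

Lemma copied_bit_not_valid (K : CMI n) :
  K.1 :&: S == finset.set0 ->
  (1 < count (fun Q => Q :&: S != finset.set0) K.2)%N -> ~ valid copied_bit K.
Proof.
move=> KS count_gt1; apply/eqP.
under [X in X - _]eq_bigr do rewrite condH_copied_bit KS -if_neg.
rewrite condH_copied_bit KS.
rewrite sum_count_const bigcup_seq_setI_eq0.
have -> : all (fun Q => Q :&: S == finset.set0) K.2 = false.
  by apply/negbTE; rewrite -has_predC has_count; exact: ltnW.
move: count_gt1; case: count => [|[|m]] //= _.
by rewrite mulrS addrC addrK gt_eqF // pmulrn_lgt0 // ln2_gt0.
Qed.

End CopiedBit.

Lemma can_Some (n : nat) (K : CMI n) C Qs :
  can K = Some (C, Qs) -> C = K.1 /\ (1 < size K.2)%N.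
Proof. by rewrite /can; case: leqP => // K2; repeat case: ifP => _; case=> <- _. Qed.

Lemma size_pur (n : nat) (K : CMI n) :
  size (pur K).2 = count (fun Q => Q :\: K.1 != finset.set0) K.2.
Proof. by rewrite size_map size_filter. Qed.

Theorem mainTheorem6 (R : realType) (n : nat) (K K' : CMI n)
  (C C' : {set 'I_n}) (Qs Qs' : seq {set 'I_n}) :
  ~ degenerate R K -> ~ degenerate R K' ->
  can (pur K) = Some (C, Qs) -> can (pur K') = Some (C', Qs') ->
  cmi_implies R K K' -> C \subset C'.
Proof.
move=> _ _ /can_Some [-> _] /can_Some [-> pur_K'_gt1] K_implies_K' /=.
apply/fintype.subsetP => i iC; apply/negPn/negP => iNC'.
have iS : i \in ~: K'.1 by rewrite finset.inE.
have K_valid : valid (copied_bit R (~: K'.1)) K.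
  apply: (valid_copied_bit R iS); apply/finset.set0Pn.
  by exists i; rewrite finset.inE iC.
apply: (copied_bit_not_valid iS _ _ (K_implies_K' _ (admissible_copied_bit R iS) K_valid)).
  by rewrite finset.setICr.
by under eq_count do rewrite -finset.setDE; rewrite -size_pur.
Qed.
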